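(* Let $\langle B,\wedge,{}'\rangle$ be an algebra with $\wedge$ binary and ${}'$ unary satisfying $x\wedge(y\wedge z)\approx (z\wedge x)\wedge y$ and $x\approx (x'\wedge y)'\wedge(x'\wedge y')'$. Then $x\wedge(y\wedge z)=y\wedge(z\wedge x)$ for all $x,y,z\in B$. *)

(* The identity x = (x' ∧ y)' ∧ (x' ∧ y')' makes every element a meet, hence
   (iterating) a meet of four elements a ∧ (b ∧ (c ∧ d)).  On the other hand,
   ten applications of x ∧ (y ∧ z) = (z ∧ x) ∧ y show that a ∧ w = w ∧ a
   whenever w is such a four-fold meet.  So ∧ is commutative, and then the
   rotation law turns into cyclicity. *)
From mathcomp Require Import ssreflect.

Section RotativeMeet.

Variables (B : Type) (meet : B -> B -> B).
Hypothesis meet_rot : forall x y z : B, meet x (meet y z) = meet (meet z x) y.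

Lemma meet_comm_nested4 (a b c d e : B) :
  meet a (meet b (meet c (meet d e))) = meet (meet b (meet c (meet d e))) a.
Proof.
transitivity (meet (meet a (meet e c)) (meet b d)).
  by rewrite (meet_rot a b) (meet_rot c d e) -(meet_rot d a) -(meet_rot _ b d).
by rewrite (meet_rot b c) -(meet_rot e b d) -(meet_rot c a)
  (meet_rot a e (meet b d)) (meet_rot c _ e) (meet_rot (meet e c)).
Qed.

Lemma meet_comm_of_surjective :
  (forall w : B, exists u v, w = meet u v) -> forall u v : B, meet u v = meet v u.
Proof.
move=> meet_onto u v.
have [v1 [v' ->]] := meet_onto v.
have [v2 [v'' ->]] := meet_onto v'.
have [v3 [v4 ->]] := meet_onto v''.
exact: meet_comm_nested4.
Qed.

Lemma meet_cyclic_of_surjective :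
  (forall w : B, exists u v, w = meet u v) ->
  forall x y z : B, meet x (meet y z) = meet y (meet z x).
Proof.
move=> meet_onto x y z.
by rewrite meet_rot (meet_comm_of_surjective meet_onto).
Qed.

End RotativeMeet.

Theorem lemma5p25 (B : Type) (meet : B -> B -> B) (c : B -> B)
  (H1 : forall x y z : B, meet x (meet y z) = meet (meet z x) y)
  (H2 : forall x y : B, x = meet (c (meet (c x) y)) (c (meet (c x) (c y)))) :
  forall x y z : B, meet x (meet y z) = meet y (meet z x).
Proof.
apply: meet_cyclic_of_surjective H1 _ => w.
by exists (c (meet (c w) w)), (c (meet (c w) (c w))); apply: H2.
Qed.
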